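(* Let $r,p\in\mathbb{C}$ with $0<|r|,|p|<1$ and $a,z\in\mathbb{C}^\times$ generic (so that all expressions are defined). Then \begin{align*} \Omega_a(z;r,p)&=\Omega_a(z^{-1};r,p)\frac{\theta_0(z^{-1}a;p)\,\theta_0(za^{-1};r)}{\theta_0(z^{-1}a^{-1};p)\,\theta_0(za;r)},\\ \Omega_a(pz;r,p)&=\frac{\theta_0(za;r)}{\theta_0(za^{-1};r)}\Omega_a(z;r,p),\\ \Omega_a(p^{-1}z;r,p)&=\frac{\theta_0(za^{-1}p^{-1};r)}{\theta_0(zap^{-1};r)}\Omega_a(z;r,p). \end{align*}
   Context: $(u;q)=\prod_{n\ge0}(1-uq^n)$, $(u;r,p)=\prod_{n,m\ge0}(1-ur^np^m)$, $\theta_0(u;q)=(u;q)(qu^{-1};q)$, and the phase function is $\Omega_a(z;r,p)=\frac{(za^{-1};r,p)(z^{-1}a^{-1}rp;r,p)}{(za;r,p)(z^{-1}arp;r,p)}$. *)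

From Stdlib Require Import Reals.
From Coquelicot Require Import Coquelicot.
Open Scope C_scope.

Fixpoint cpow (x : C) (n : nat) : C :=
  match n with O => 1 | S k => x * cpow x k end.

(* limit of a complex sequence (componentwise, via Coquelicot's Lim_seq);
   equals the usual limit whenever the sequence converges *)
Definition Clim (u : nat -> C) : C :=
  (real (Lim_seq (fun N => Re (u N))), real (Lim_seq (fun N => Im (u N)))).

Fixpoint cprod (N : nat) (f : nat -> C) : C :=
  match N with O => 1 | S k => cprod k f * f k end.

Definition qpoch (u q : C) : C :=
  Clim (fun N => cprod N (fun n => 1 - u * cpow q n)).

(* (u;r,p) = prod_{n,m>=0} (1 - u r^n p^m), limit of square partial products
   (the double product converges absolutely for |r|,|p|<1) *)
Definition qpoch2 (u r p : C) : C :=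
  Clim (fun N => cprod N (fun n => cprod N (fun m => 1 - u * cpow r n * cpow p m))).

Definition theta0 (u q : C) : C := qpoch u q * qpoch (q / u) q.

Definition Omega (a z r p : C) : C :=
  (qpoch2 (z / a) r p * qpoch2 (/ z / a * r * p) r p)
  / (qpoch2 (z * a) r p * qpoch2 (/ z * a * r * p) r p).

From Stdlib Require Import Reals Lra Lia.
From Coquelicot Require Import Coquelicot.
Open Scope C_scope.

(* Peeling the first row (resp. column) off the square partial products of (u;r,p)
   gives (u;r,p) = (u;p) (ru;r,p) and (u;r,p) = (u;r) (pu;r,p): the leftover column
   of factors 1 - u r^n p^N tends to 1, and the partial products themselves converge
   because consecutive ones differ by O(max(|r|,|p|)^N).  With
   Psi(u) = (u;r,p) / (rp/u;r,p) one has Omega_a(z) = Psi(z/a) / Psi(za), and the two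
   shifts yield Psi(u) = theta_0(u;r) Psi(pu) and Psi(u) Psi(1/u) = theta_0(u;r) theta_0(1/u;p)
   (the factors 1 - 1/u coming from (1/u;r) and (1/u;p) cancel).  These give the first two
   identities; the third is the second one at z/p. *)

Lemma cprod_mult N (f g : nat -> C) :
  cprod N (fun k => f k * g k) = cprod N f * cprod N g.
Proof. induction N as [|N IH]; simpl; [ring | rewrite IH; ring]. Qed.

Lemma cprod_ext N (f g : nat -> C) :
  (forall k, (k < N)%nat -> f k = g k) -> cprod N f = cprod N g.
Proof.
  induction N as [|N IH]; intros H; simpl; [reflexivity |].
  rewrite IH, H; [reflexivity | lia | intros; apply H; lia].
Qed.

Lemma cprod_Sl N (f : nat -> C) :
  cprod (S N) f = f O * cprod N (fun k => f (S k)).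
Proof.
  induction N as [|N IH]; [simpl; ring |].
  change (cprod (S (S N)) f) with (cprod (S N) f * f (S N)).
  rewrite IH. simpl. ring.
Qed.

Lemma cprod_swap N M (f : nat -> nat -> C) :
  cprod N (fun n => cprod M (f n)) = cprod M (fun m => cprod N (fun n => f n m)).
Proof.
  induction N as [|N IH]; simpl.
  - induction M as [|M IHM]; simpl; [reflexivity | rewrite <- IHM; ring].
  - rewrite IH, <- cprod_mult. reflexivity.
Qed.

Fixpoint rsum (N : nat) (g : nat -> R) : R :=
  match N with O => 0%R | S k => (rsum k g + g k)%R end.

Lemma rsum_ge0 N g : (forall k, 0 <= g k)%R -> (0 <= rsum N g)%R.
Proof. intros H; induction N; simpl; [lra | specialize (H N); lra]. Qed.

Lemma rsum_le N g h : (forall k, g k <= h k)%R -> (rsum N g <= rsum N h)%R.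
Proof. intros H; induction N; simpl; [lra | specialize (H N); lra]. Qed.

Lemma rsum_geom_le N c x rho : (0 <= c)%R -> (0 <= x <= rho)%R -> (rho < 1)%R ->
  (rsum N (fun k => c * x ^ k) <= c / (1 - rho))%R.
Proof.
  intros Hc Hx Hrho.
  assert (E : (rsum N (fun k => c * x ^ k) * (1 - x) = c * (1 - x ^ N))%R).
  { induction N as [|N IH]; simpl; [ring | rewrite Rmult_plus_distr_r, IH; ring]. }
  assert (HxN : (0 <= x ^ N)%R) by (apply pow_le; lra).
  assert (Hsum : (rsum N (fun k => c * x ^ k) <= c / (1 - x))%R).
  { apply (Rmult_le_reg_r (1 - x)); [lra |].
    rewrite E. unfold Rdiv. rewrite Rmult_assoc, Rinv_l by lra. nra. }
  eapply Rle_trans; [exact Hsum |].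
  apply Rmult_le_compat_l; [exact Hc | apply Rinv_le_contravar; lra].
Qed.

Lemma exp_le_mono x y : (x <= y)%R -> (exp x <= exp y)%R.
Proof. intros [H|H]; [left; now apply exp_increasing | subst; lra]. Qed.

Lemma exp_sub1_le t : (0 <= t)%R -> (exp t - 1 <= t * exp t)%R.
Proof.
  intros Ht. pose proof (exp_ineq1_le (- t)). pose proof (exp_pos t).
  assert (exp (- t) * exp t = 1)%R
    by (rewrite <- exp_plus, Rplus_opp_l; apply exp_0).
  nra.
Qed.

Lemma Cmod_cpow q n : Cmod (cpow q n) = (Cmod q ^ n)%R.
Proof. induction n as [|n IH]; simpl; [apply Cmod_1 | rewrite Cmod_mult, IH; reflexivity]. Qed.

Lemma Cmod_1m c : (Cmod (1 - c) <= 1 + Cmod c)%R.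
Proof.
  unfold Cminus. rewrite <- Cmod_1 at 2. rewrite <- (Cmod_opp c).
  apply Cmod_triangle.
Qed.

Lemma im_le_Cmod c : (Rabs (Im c) <= Cmod c)%R.
Proof.
  destruct c as [x y]. unfold Cmod; simpl.
  rewrite <- sqrt_Rsqr_abs. apply sqrt_le_1_alt. unfold Rsqr. nra.
Qed.

Lemma Cmod_cprod_le_exp N (F : nat -> C) (b : nat -> R) :
  (forall k, Cmod (F k) <= exp (b k))%R -> (Cmod (cprod N F) <= exp (rsum N b))%R.
Proof.
  intros H; induction N as [|N IH]; simpl; [rewrite Cmod_1, exp_0; lra |].
  rewrite Cmod_mult, exp_plus. apply Rmult_le_compat; auto using Cmod_ge_0.
Qed.

Lemma Cmod_cprod_1m N (c : nat -> C) :
  (Cmod (cprod N (fun k => (1 - c k)%C)) <= exp (rsum N (fun k => Cmod (c k))))%R /\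
  (Cmod (cprod N (fun k => (1 - c k)%C) - 1)%C <= exp (rsum N (fun k => Cmod (c k))) - 1)%R.
Proof.
  induction N as [|N [IH1 IH2]]; simpl.
  - replace (1 - 1) with (RtoC 0) by ring. rewrite Cmod_1, exp_0, Cmod_0. lra.
  - set (P := cprod N (fun k => 1 - c k)) in *.
    set (s := rsum N (fun k => Cmod (c k))) in *.
    pose proof (Cmod_1m (c N)). pose proof (exp_ineq1_le (Cmod (c N))).
    pose proof (Cmod_ge_0 (c N)). pose proof (Cmod_ge_0 (P - 1)).
    pose proof (Cmod_ge_0 (1 - c N)). pose proof (exp_pos s).
    rewrite exp_plus. split.
    + rewrite Cmod_mult. apply Rmult_le_compat; auto using Cmod_ge_0. lra.
    + replace (P * (1 - c N) - 1) with ((P - 1) * (1 - c N) + - c N) by ring.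
      eapply Rle_trans; [apply Cmod_triangle |].
      rewrite Cmod_mult, Cmod_opp.
      assert (Cmod (P - 1) * Cmod (1 - c N) <= (exp s - 1) * (1 + Cmod (c N)))%R
        by (apply Rmult_le_compat; lra).
      nra.
Qed.

Lemma Cmod_cprod_1m_le N (c : nat -> C) s M :
  (rsum N (fun k => Cmod (c k)) <= s)%R -> (s <= M)%R ->
  (Cmod (cprod N (fun k => (1 - c k)%C)) <= exp M)%R /\
  (Cmod (cprod N (fun k => (1 - c k)%C) - 1)%C <= s * exp M)%R.
Proof.
  intros Hs HM. destruct (Cmod_cprod_1m N c) as [H1 H2].
  assert (H0 : (0 <= rsum N (fun k => Cmod (c k)))%R)
    by (apply rsum_ge0; intros; apply Cmod_ge_0).
  split.
  - eapply Rle_trans; [exact H1 | apply exp_le_mono; lra].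
  - eapply Rle_trans; [exact H2 |]. eapply Rle_trans; [apply exp_sub1_le; exact H0 |].
    apply Rmult_le_compat; [lra | left; apply exp_pos | lra | apply exp_le_mono; lra].
Qed.

Definition is_Clim (s : nat -> C) (L : C) :=
  is_lim_seq (fun n => Re (s n)) (Re L) /\ is_lim_seq (fun n => Im (s n)) (Im L).

Lemma Clim_correct s L : is_Clim s L -> Clim s = L.
Proof.
  intros [H1 H2]. unfold Clim.
  rewrite (is_lim_seq_unique _ _ H1), (is_lim_seq_unique _ _ H2).
  destruct L; reflexivity.
Qed.

Lemma is_Clim_unique s L M : is_Clim s L -> is_Clim s M -> L = M.
Proof. intros HL HM. rewrite <- (Clim_correct _ _ HL). now apply Clim_correct. Qed.

Lemma is_Clim_ext s t L : (forall n, s n = t n) -> is_Clim s L -> is_Clim t L.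
Proof.
  intros E [H1 H2]. split; eapply is_lim_seq_ext; try eassumption; intros n; simpl; now rewrite E.
Qed.

Lemma is_Clim_incr_1 s L : is_Clim s L -> is_Clim (fun n => s (S n)) L.
Proof.
  intros [H1 H2]. split;
    [apply (is_lim_seq_incr_1 (fun n => Re (s n))) | apply (is_lim_seq_incr_1 (fun n => Im (s n)))];
    assumption.
Qed.

Lemma is_Clim_const c : is_Clim (fun _ => c) c.
Proof. split; apply is_lim_seq_const. Qed.

Lemma is_Clim_mult s t L M :
  is_Clim s L -> is_Clim t M -> is_Clim (fun n => s n * t n) (L * M).
Proof.
  intros [H1 H2] [H3 H4]. split; simpl.
  - apply is_lim_seq_minus'; apply is_lim_seq_mult'; assumption.
  - apply is_lim_seq_plus'; apply is_lim_seq_mult'; assumption.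
Qed.

Lemma is_Clim_of_Cmod_le s L (e : nat -> R) :
  (forall n, Cmod (s n - L) <= e n)%R -> is_lim_seq e 0%R -> is_Clim s L.
Proof.
  intros H He.
  assert (squeeze : forall (f : nat -> R) l,
            (forall n, Rabs (f n - l) <= e n)%R -> is_lim_seq f l).
  { intros f l Hf. apply is_lim_seq_le_le with (u := fun n => (l - e n)%R) (w := fun n => (l + e n)%R).
    - intros n. specialize (Hf n). apply Rabs_le_between' in Hf. lra.
    - rewrite <- (Rminus_0_r l) at 1. apply is_lim_seq_minus'; [apply is_lim_seq_const | exact He].
    - rewrite <- (Rplus_0_r l) at 1. apply is_lim_seq_plus'; [apply is_lim_seq_const | exact He]. }
  split; apply squeeze; intros n; eapply Rle_trans; [| apply (H n) | | apply (H n)].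
  - apply (re_le_Cmod (s n - L)).
  - apply (im_le_Cmod (s n - L)).
Qed.

Lemma ex_lim_seq_of_geom_diff (u : nat -> R) K rho :
  (0 <= rho < 1)%R -> (forall n, Rabs (u (S n) - u n) <= K * rho ^ n)%R ->
  exists l : R, is_lim_seq u l.
Proof.
  intros Hrho H. set (d := fun n => (u (S n) - u n)%R).
  assert (Hd : ex_series d).
  { apply ex_series_Rabs.
    apply (@ex_series_le R_AbsRing R_CompleteNormedModule _ (fun n => K * rho ^ n)%R).
    - intros n. unfold norm; simpl. unfold abs; simpl. rewrite Rabs_Rabsolu. apply H.
    - apply (ex_series_scal_l K (fun n => rho ^ n)%R). apply ex_series_geom.
      rewrite Rabs_pos_eq; lra. }
  destruct (ex_series_Reals_0 _ Hd) as [l Hl].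
  exists (l + u O)%R. apply is_lim_seq_incr_1.
  apply is_lim_seq_ext with (u := fun N => (sum_f_R0 d N + u O)%R).
  { intros N. induction N as [|N IH]; simpl; unfold d in *; lra. }
  apply is_lim_seq_plus'; [now apply is_lim_seq_Reals | apply is_lim_seq_const].
Qed.

Lemma ex_Clim_of_geom_diff (s : nat -> C) K rho :
  (0 <= rho < 1)%R -> (forall n, Cmod (s (S n) - s n) <= K * rho ^ n)%R ->
  exists L, is_Clim s L.
Proof.
  intros Hrho H.
  destruct (ex_lim_seq_of_geom_diff (fun n => Re (s n)) K rho Hrho) as [l1 H1].
  { intros n. eapply Rle_trans; [apply (re_le_Cmod (s (S n) - s n)) | apply H]. }
  destruct (ex_lim_seq_of_geom_diff (fun n => Im (s n)) K rho Hrho) as [l2 H2].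
  { intros n. eapply Rle_trans; [apply (im_le_Cmod (s (S n) - s n)) | apply H]. }
  exists (l1, l2). split; assumption.
Qed.

Lemma is_Clim_Clim s : (exists L, is_Clim s L) -> is_Clim s (Clim s).
Proof. intros [L HL]. now rewrite (Clim_correct _ _ HL). Qed.

Definition qpoch_part N u q := cprod N (fun n => 1 - u * cpow q n).

Definition qpoch2_part N u r p :=
  cprod N (fun n => cprod N (fun m => 1 - u * cpow r n * cpow p m)).

Lemma qpoch_is_Clim u q : (Cmod q < 1)%R -> is_Clim (fun N => qpoch_part N u q) (qpoch u q).
Proof.
  intros Hq. apply is_Clim_Clim.
  pose proof (Cmod_ge_0 q) as Hq0. pose proof (Cmod_ge_0 u) as Hu0.
  set (M := (Cmod u / (1 - Cmod q))%R).
  apply (ex_Clim_of_geom_diff _ (Cmod u * exp M) (Cmod q)); [lra |]. intros n.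
  unfold qpoch_part. simpl.
  replace (cprod n (fun k => 1 - u * cpow q k) * (1 - u * cpow q n) - cprod n (fun k => 1 - u * cpow q k))
    with (cprod n (fun k => 1 - u * cpow q k) * - (u * cpow q n)) by ring.
  rewrite Cmod_mult, Cmod_opp, Cmod_mult, Cmod_cpow.
  destruct (Cmod_cprod_1m_le n (fun k => u * cpow q k) M M) as [HP _]; [| lra |].
  - eapply Rle_trans; [| apply (rsum_geom_le n (Cmod u) (Cmod q) (Cmod q)); lra].
    apply rsum_le. intros k. rewrite Cmod_mult, Cmod_cpow. lra.
  - pose proof (pow_le (Cmod q) n Hq0).
    assert (0 <= Cmod u * Cmod q ^ n)%R by (apply Rmult_le_pos; auto).
    pose proof (Cmod_ge_0 (cprod n (fun k => 1 - u * cpow q k))). nra.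
Qed.

Lemma qpoch_shift u q : (Cmod q < 1)%R -> qpoch u q = (1 - u) * qpoch (q * u) q.
Proof.
  intros Hq. apply (is_Clim_unique (fun N => qpoch_part (S N) u q)).
  - apply (is_Clim_incr_1 (fun N => qpoch_part N u q)). now apply qpoch_is_Clim.
  - apply is_Clim_ext with (s := fun N => (1 - u) * qpoch_part N (q * u) q).
    + intros N. unfold qpoch_part. rewrite cprod_Sl. simpl. f_equal; [ring |].
      apply cprod_ext. intros k _. simpl. ring.
    + apply is_Clim_mult; [apply is_Clim_const | now apply qpoch_is_Clim].
Qed.

Lemma qpoch2_part_step N u r p :
  qpoch2_part (S N) u r p
  = qpoch2_part N u r p * cprod N (fun n => 1 - u * cpow r n * cpow p N)
    * cprod (S N) (fun m => 1 - u * cpow r N * cpow p m).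
Proof.
  unfold qpoch2_part. simpl cprod at 1. f_equal.
  rewrite <- cprod_mult. apply cprod_ext. intros k _. reflexivity.
Qed.

Section DoubleProduct.

Variables (u r p : C).
Hypotheses (Hr : (Cmod r < 1)%R) (Hp : (Cmod p < 1)%R).

Let rho := Rmax (Cmod r) (Cmod p).
Let D := (/ (1 - rho))%R.
Let M := (Cmod u * D * D)%R.

Lemma moduli_bounds :
  (0 <= Cmod r <= rho)%R /\ (0 <= Cmod p <= rho)%R /\ (rho < 1)%R /\ (1 <= D)%R /\ (0 <= M)%R.
Proof.
  pose proof (Cmod_ge_0 r). pose proof (Cmod_ge_0 p). pose proof (Cmod_ge_0 u).
  assert (Hrho : (rho < 1)%R) by (apply Rmax_lub_lt; auto).
  assert (0 <= rho)%R by (eapply Rle_trans; [| apply Rmax_l]; auto).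
  assert (HD : (1 <= D)%R) by (unfold D; rewrite <- Rinv_1 at 1; apply Rinv_le_contravar; lra).
  split; [split; [auto | apply Rmax_l] |]. split; [split; [auto | apply Rmax_r] |].
  repeat split; auto. unfold M. apply Rmult_le_pos; [apply Rmult_le_pos |]; lra.
Qed.

Lemma geom_row_sum_le L N t w :
  (0 <= t <= rho)%R -> (0 <= w <= rho)%R ->
  (rsum L (fun k => Cmod u * t ^ N * w ^ k) <= M * rho ^ N)%R.
Proof.
  intros Ht Hw. destruct moduli_bounds as (_ & _ & Hrho & HD & _).
  pose proof (Cmod_ge_0 u).
  assert (HtN : (0 <= t ^ N <= rho ^ N)%R) by (split; [apply pow_le | apply pow_incr]; lra).
  eapply Rle_trans; [apply rsum_geom_le with (rho := rho); [apply Rmult_le_pos | |]; lra |].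
  unfold M. fold D. unfold Rdiv. fold D.
  assert (0 <= Cmod u * t ^ N)%R by (apply Rmult_le_pos; lra).
  assert (Cmod u * t ^ N <= Cmod u * rho ^ N)%R by (apply Rmult_le_compat_l; lra).
  assert (0 <= Cmod u * rho ^ N * D)%R by (apply Rmult_le_pos; lra).
  nra.
Qed.

Lemma qpoch2_part_Cmod_le N : (Cmod (qpoch2_part N u r p) <= exp M)%R.
Proof.
  destruct moduli_bounds as (Hx & Hy & Hrho & HD & HM). pose proof (Cmod_ge_0 u).
  unfold qpoch2_part.
  eapply Rle_trans.
  - apply Cmod_cprod_le_exp with (b := fun n => (Cmod u * Cmod r ^ n * D)%R). intros n.
    assert (H0 : (0 <= Cmod u * Cmod r ^ n)%R) by (apply Rmult_le_pos; [lra | apply pow_le; lra]).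
    destruct (Cmod_cprod_1m_le N (fun m => u * cpow r n * cpow p m)
                (Cmod u * Cmod r ^ n * D) (Cmod u * Cmod r ^ n * D)) as [Hb _]; [| lra | exact Hb].
    eapply Rle_trans; [| apply (rsum_geom_le N _ (Cmod p) rho); lra].
    apply rsum_le. intros m. rewrite !Cmod_mult, !Cmod_cpow. lra.
  - apply exp_le_mono. unfold M.
    eapply Rle_trans;
      [apply rsum_le with (h := fun n => (Cmod u * D * Cmod r ^ n)%R); intros; right; ring |].
    apply rsum_geom_le; [apply Rmult_le_pos | |]; lra.
Qed.

Lemma qpoch2_part_diff_le n :
  (Cmod (qpoch2_part (S n) u r p - qpoch2_part n u r p)
   <= exp M * (M * exp M * exp M + M * exp M) * rho ^ n)%R.
Proof.
  destruct moduli_bounds as (Hx & Hy & Hrho & HD & HM).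
  assert (Hrn : (0 <= rho ^ n <= 1)%R)
    by (split; [apply pow_le | rewrite <- (pow1 n); apply pow_incr]; lra).
  assert (HMn : (M * rho ^ n <= M)%R) by nra.
  destruct (Cmod_cprod_1m_le n (fun k => u * cpow r k * cpow p n) (M * rho ^ n) M)
    as [_ HA]; [| exact HMn |].
  { eapply Rle_trans; [| apply (geom_row_sum_le n n (Cmod p) (Cmod r)); assumption].
    apply rsum_le. intros k. rewrite !Cmod_mult, !Cmod_cpow. right; ring. }
  destruct (Cmod_cprod_1m_le (S n) (fun k => u * cpow r n * cpow p k) (M * rho ^ n) M)
    as [HB1 HB2]; [| exact HMn |].
  { eapply Rle_trans; [| apply (geom_row_sum_le (S n) n (Cmod r) (Cmod p)); assumption].
    apply rsum_le. intros k. rewrite !Cmod_mult, !Cmod_cpow. right; ring. }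
  pose proof (qpoch2_part_Cmod_le n) as HQ.
  rewrite qpoch2_part_step.
  set (Q := qpoch2_part n u r p) in *.
  set (A := cprod n (fun k => 1 - u * cpow r k * cpow p n)) in *.
  set (B := cprod (S n) (fun k => 1 - u * cpow r n * cpow p k)) in *.
  replace (Q * A * B - Q) with (Q * ((A - 1) * B + (B - 1))) by ring.
  rewrite Cmod_mult.
  pose proof (Cmod_ge_0 Q). pose proof (Cmod_ge_0 (A - 1)). pose proof (Cmod_ge_0 B).
  pose proof (Cmod_ge_0 (B - 1)). pose proof (exp_pos M).
  assert (HAB : (Cmod ((A - 1) * B + (B - 1))
                 <= (M * exp M * exp M + M * exp M) * rho ^ n)%R).
  { eapply Rle_trans; [apply Cmod_triangle |]. rewrite Cmod_mult.
    assert (Cmod (A - 1) * Cmod B <= M * rho ^ n * exp M * exp M)%R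
      by (apply Rmult_le_compat; auto).
    nra. }
  rewrite Rmult_assoc. apply Rmult_le_compat; auto using Cmod_ge_0.
Qed.

Lemma qpoch2_is_Clim : is_Clim (fun N => qpoch2_part N u r p) (qpoch2 u r p).
Proof.
  apply is_Clim_Clim. destruct moduli_bounds as (Hx & _ & Hrho & _).
  eapply ex_Clim_of_geom_diff; [| apply qpoch2_part_diff_le]. lra.
Qed.

End DoubleProduct.

Lemma qpoch2_swap u r p : (Cmod r < 1)%R -> (Cmod p < 1)%R -> qpoch2 u r p = qpoch2 u p r.
Proof.
  intros Hr Hp. apply (is_Clim_unique (fun N => qpoch2_part N u r p)); [now apply qpoch2_is_Clim |].
  apply is_Clim_ext with (s := fun N => qpoch2_part N u p r); [| now apply qpoch2_is_Clim].
  intros N. unfold qpoch2_part. rewrite cprod_swap.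
  apply cprod_ext; intros k _. apply cprod_ext; intros m _. ring.
Qed.

Lemma qpoch2_part_Sl N u r p :
  qpoch2_part (S N) u r p
  = qpoch_part (S N) u p
    * (qpoch2_part N (r * u) r p * cprod N (fun n => 1 - r * u * cpow r n * cpow p N)).
Proof.
  unfold qpoch2_part at 1. rewrite cprod_Sl. f_equal.
  - apply cprod_ext. intros m _. simpl. ring.
  - unfold qpoch2_part. rewrite <- cprod_mult. apply cprod_ext. intros k _.
    simpl cprod at 1. f_equal; [apply cprod_ext; intros m _ |]; simpl; ring.
Qed.

Lemma cprod_column_is_Clim v r p : (Cmod r < 1)%R -> (Cmod p < 1)%R ->
  is_Clim (fun N => cprod N (fun n => 1 - v * cpow r n * cpow p N)) 1.
Proof.
  intros Hr Hp. pose proof (Cmod_ge_0 r). pose proof (Cmod_ge_0 p). pose proof (Cmod_ge_0 v).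
  set (s := (Cmod v / (1 - Cmod r))%R).
  assert (Hs : (0 <= s)%R) by (apply Rmult_le_pos; [lra | left; apply Rinv_0_lt_compat; lra]).
  apply is_Clim_of_Cmod_le with (e := fun N => (s * exp s * Cmod p ^ N)%R).
  - intros N.
    assert (HpN : (0 <= Cmod p ^ N <= 1)%R)
      by (split; [apply pow_le | rewrite <- (pow1 N); apply pow_incr]; lra).
    destruct (Cmod_cprod_1m_le N (fun n => v * cpow r n * cpow p N) (s * Cmod p ^ N) s)
      as [_ HB]; [| nra |].
    + replace (s * Cmod p ^ N)%R with (Cmod v * Cmod p ^ N / (1 - Cmod r))%R
        by (unfold s, Rdiv; ring).
      eapply Rle_trans; [| apply (rsum_geom_le N _ (Cmod r)); try apply Rmult_le_pos; lra].
      apply rsum_le. intros k. rewrite !Cmod_mult, !Cmod_cpow. right; ring.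
    + eapply Rle_trans; [exact HB | right; ring].
  - rewrite <- (Rmult_0_r (s * exp s)). apply is_lim_seq_mult'; [apply is_lim_seq_const |].
    apply is_lim_seq_geom. rewrite Rabs_pos_eq; lra.
Qed.

Lemma qpoch2_shift_r u r p : (Cmod r < 1)%R -> (Cmod p < 1)%R ->
  qpoch2 u r p = qpoch u p * qpoch2 (r * u) r p.
Proof.
  intros Hr Hp. apply (is_Clim_unique (fun N => qpoch2_part (S N) u r p)).
  - apply (is_Clim_incr_1 (fun N => qpoch2_part N u r p)). now apply qpoch2_is_Clim.
  - rewrite <- (Cmult_1_r (qpoch2 (r * u) r p)).
    apply is_Clim_ext with (s := fun N => qpoch_part (S N) u p
      * (qpoch2_part N (r * u) r p * cprod N (fun n => 1 - r * u * cpow r n * cpow p N))).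
    { intros N. symmetry. apply qpoch2_part_Sl. }
    apply is_Clim_mult; [apply (is_Clim_incr_1 (fun N => qpoch_part N u p)); now apply qpoch_is_Clim |].
    apply is_Clim_mult; [now apply qpoch2_is_Clim | now apply cprod_column_is_Clim].
Qed.

Lemma qpoch2_shift_p u r p : (Cmod r < 1)%R -> (Cmod p < 1)%R ->
  qpoch2 u r p = qpoch u r * qpoch2 (p * u) r p.
Proof. intros Hr Hp. rewrite !(qpoch2_swap _ r p) by auto. now apply qpoch2_shift_r. Qed.

Lemma qpoch2_mul_shift (r p u : C) : (Cmod r < 1)%R -> (Cmod p < 1)%R ->
  qpoch2 u r p * qpoch2 (r / u) r p
  = theta0 u r * qpoch2 (p * u) r p * qpoch2 (p * (r / u)) r p.
Proof.
  intros Hr Hp. rewrite (qpoch2_shift_p u), (qpoch2_shift_p (r / u)) by assumption.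
  unfold theta0. ring.
Qed.

Lemma qpoch2_mul_inv (r p u : C) : (Cmod r < 1)%R -> (Cmod p < 1)%R -> u <> 0 ->
  qpoch2 u r p * qpoch2 (/ u) r p
  = theta0 u r * theta0 (/ u) p * qpoch2 (r * (p * u)) r p * qpoch2 (r * (p * / u)) r p.
Proof.
  intros Hr Hp Hu.
  rewrite (qpoch2_shift_p u), (qpoch2_shift_r (p * u)), (qpoch2_shift_p (/ u)),
    (qpoch2_shift_r (p * / u)) by assumption.
  unfold theta0. rewrite (qpoch_shift (/ u) r), (qpoch_shift (/ u) p) by assumption.
  replace (p / / u) with (p * u) by (field; exact Hu).
  unfold Cdiv. ring.
Qed.

Lemma Ceq_div_of_mul (x y t : C) : t <> 0 -> x * t = y -> x = y / t.
Proof. intros Ht <-. field. exact Ht. Qed.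

Lemma Omega_inv (r p a z : C) : (Cmod r < 1)%R -> (Cmod p < 1)%R -> a <> 0 -> z <> 0 ->
  qpoch2 (z * a) r p <> 0 -> qpoch2 (/ z * a * r * p) r p <> 0 ->
  qpoch2 (/ z * a) r p <> 0 -> qpoch2 (/ / z * a * r * p) r p <> 0 ->
  theta0 (/ z / a) p <> 0 -> theta0 (z * a) r <> 0 ->
  Omega a z r p
  = Omega a (/ z) r p * (theta0 (/ z * a) p * theta0 (z / a) r)
                      / (theta0 (/ z / a) p * theta0 (z * a) r).
Proof.
  intros Hr Hp Ha Hz N1 N2 N3 N4 T1 T2.
  assert (Hza : z * a <> 0) by (apply Cmult_neq_0; assumption).
  assert (Hz_a : z / a <> 0).
  { intros E. apply Hz. replace z with (z / a * a) by (field; exact Ha). rewrite E. ring. }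
  assert (Ex := qpoch2_mul_inv r p (z / a) Hr Hp Hz_a).
  replace (/ (z / a)) with (/ z * a) in Ex by (field; auto).
  replace (r * (p * (z / a))) with (z / a * r * p) in Ex by ring.
  replace (r * (p * (/ z * a))) with (/ z * a * r * p) in Ex by ring.
  assert (Ey := qpoch2_mul_inv r p (z * a) Hr Hp Hza).
  replace (/ (z * a)) with (/ z / a) in Ey by (field; auto).
  replace (r * (p * (z * a))) with (z * a * r * p) in Ey by ring.
  replace (r * (p * (/ z / a))) with (/ z / a * r * p) in Ey by ring.
  apply Ceq_div_of_mul in Ex; [| exact N3].
  rewrite (Cmult_comm (qpoch2 (z * a) r p)) in Ey. apply Ceq_div_of_mul in Ey; [| exact N1].
  unfold Omega. replace (/ / z) with z in * by (field; auto).
  rewrite Ex, Ey. field. repeat split; auto.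
Qed.

Lemma Omega_mul_shift (r p a z w : C) :
  (Cmod r < 1)%R -> (Cmod p < 1)%R -> p <> 0 -> a <> 0 -> z <> 0 -> w = p * z ->
  qpoch2 (z * a) r p <> 0 -> qpoch2 (/ z * a * r * p) r p <> 0 ->
  qpoch2 (w * a) r p <> 0 -> qpoch2 (/ w * a * r * p) r p <> 0 ->
  Omega a w r p * theta0 (z / a) r = theta0 (z * a) r * Omega a z r p.
Proof.
  intros Hr Hp Hp0 Ha Hz -> N1 N2 N3 N4.
  assert (E1 := qpoch2_mul_shift r p (z / a) Hr Hp).
  replace (r / (z / a)) with (/ (p * z) * a * r * p) in E1 by (field; auto).
  replace (p * (z / a)) with (p * z / a) in E1 by (field; auto).
  replace (p * (/ (p * z) * a * r * p)) with (/ z * a * r * p) in E1 by (field; auto).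
  assert (E2 := qpoch2_mul_shift r p (z * a) Hr Hp).
  replace (r / (z * a)) with (/ (p * z) / a * r * p) in E2 by (field; auto).
  replace (p * (z * a)) with (p * z * a) in E2 by ring.
  replace (p * (/ (p * z) / a * r * p)) with (/ z / a * r * p) in E2 by (field; auto).
  apply Ceq_div_of_mul in E1; [| exact N4].
  rewrite (Cmult_comm (qpoch2 (z * a) r p)) in E2. apply Ceq_div_of_mul in E2; [| exact N1].
  unfold Omega. rewrite E1, E2. field. repeat split; auto.
Qed.

Theorem lemmaA3 (r p a z : C) :
  0 < Cmod r < 1 -> 0 < Cmod p < 1 -> a <> 0 -> z <> 0 ->
  (* genericity: every denominator occurring below is nonzero *)
  qpoch2 (z * a) r p <> 0 -> qpoch2 (/ z * a * r * p) r p <> 0 ->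
  qpoch2 (/ z * a) r p <> 0 -> qpoch2 (/ / z * a * r * p) r p <> 0 ->
  qpoch2 (p * z * a) r p <> 0 -> qpoch2 (/ (p * z) * a * r * p) r p <> 0 ->
  qpoch2 (/ p * z * a) r p <> 0 -> qpoch2 (/ (/ p * z) * a * r * p) r p <> 0 ->
  theta0 (/ z / a) p <> 0 -> theta0 (z * a) r <> 0 ->
  theta0 (z / a) r <> 0 -> theta0 (z * a / p) r <> 0 ->
  Omega a z r p
    = Omega a (/ z) r p * (theta0 (/ z * a) p * theta0 (z / a) r)
                        / (theta0 (/ z / a) p * theta0 (z * a) r)
  /\ Omega a (p * z) r p = theta0 (z * a) r / theta0 (z / a) r * Omega a z r p
  /\ Omega a (/ p * z) r p
       = theta0 (z / a / p) r / theta0 (z * a / p) r * Omega a z r p.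
Proof.
  intros [_ Hr] [Hp0 Hp] Ha Hz N1 N2 N3 N4 N5 N6 N7 N8 T1 T2 T3 T4.
  assert (Hp' : p <> 0) by (apply Cmod_gt_0; exact Hp0).
  split; [| split].
  - now apply Omega_inv.
  - assert (E := Omega_mul_shift r p a z (p * z) Hr Hp Hp' Ha Hz eq_refl N1 N2 N5 N6).
    apply Ceq_div_of_mul in E; [rewrite E; field; auto | exact T3].
  - assert (Hz' : / p * z <> 0).
    { intros E. apply Hz. replace z with (p * (/ p * z)) by (field; exact Hp'). rewrite E. ring. }
    assert (E := Omega_mul_shift r p a (/ p * z) z Hr Hp Hp' Ha Hz' ltac:(field; exact Hp') N7 N8 N1 N2).
    replace (/ p * z / a) with (z / a / p) in E by (field; auto).
    replace (/ p * z * a) with (z * a / p) in E by (field; auto).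
    rewrite (Cmult_comm (theta0 (z * a / p) r)) in E. symmetry in E. apply Ceq_div_of_mul in E; [rewrite E; field; auto | exact T4].
Qed.
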